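(* For every positive integer $N$ and every nonempty index $\boldsymbol{k}$, $F_N(\boldsymbol{k};t)=G_N(\boldsymbol{k}^\vee;t)$ in $\mathbb{Q}(t)$.
   Context: $t$ is an indeterminate, $[n]=\{1,\dots,n\}$, $(a)_n=a(a+1)\cdots(a+n-1)$, $\binom{t}{n}=t(t-1)\cdots(t-n+1)/n!$. An index is a tuple of positive integers. $F_N$: for $\boldsymbol{k}=(k_1,\dots,k_r)$ and $A\subset[r]$, $\overline{S}_{r,N}(A)=\{(n_1,\dots,n_r)\in[N-1]^r: n_{i-1}\le n_i\text{ if }1<i\in[r]\setminus A,\ n_{i-1}<n_i\text{ if }1<i\in A\}$ and $F_N(\boldsymbol{k};t)=\sum_{A\subset[r]}(-1)^{\#A}\sum_{\overline{S}_{r,N}(A)}\prod_{i\in A}(N-n_i+t)^{-k_i}\prod_{i\in[r]\setminus A}n_i^{-k_i}$. $G_N$: with $[r]^1_{\boldsymbol{k}}=\{i:k_i=1\}$ and $S^\star_{r,N}(A)$ the set of $(n_1,\dots,n_r)\in[N-1]^r$ such that for each $i\in[r-1]$: $n_i\le n_{i+1}$ if $i\in A$ or $i+1\notin A$, and $n_i<n_{i+1}$ if $i\notin A$ and $i+1\in A$, $G_N(\boldsymbol{k};t)=\sum_{A\subset[r]^1_{\boldsymbol{k}}\setminus\{r\}}\sum_{S^\star_{r,N}(A)}\prod_{i\in A}(N-n_i+t)^{-1}\prod_{i\in[r]\setminus A}n_i^{-k_i}\cdot(-1)^{n_r-1}\binom{t}{n_r}\frac{(1-N)_{n_r}}{(1-N-t)_{n_r}}$.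 Hoffman dual: an index $\boldsymbol{k}$ of weight $w$ is uniquely written as $(1\,\square_1\,1\,\square_2\cdots\square_{w-1}\,1)$ with each $\square_j$ a comma or a plus sign (read as addition); $\boldsymbol{k}^\vee$ is the index obtained by interchanging commas and plus signs in every box. *)

From HB Require Import structures.
From mathcomp Require Import all_boot all_order all_algebra fraction.
Set Implicit Arguments. Unset Strict Implicit. Unset Printing Implicit Defensive.
Import Order.TTheory GRing.Theory Num.Theory.
Local Open Scope ring_scope.

Definition Qt : Type := {fraction {poly rat}}.
Definition tQ : Qt := tofrac ('X : {poly rat}).

Definition is_index (k : seq nat) : bool := all (fun ki => 0 < ki)%N k.

(* Hoffman dual.  An index of weight w is written 1 [] 1 [] ... [] 1 with
   w-1 boxes; a box is encoded as a bool: true = comma, false = plus. *)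
Definition boxes_of_index (k : seq nat) : seq bool :=
  behead (flatten [seq true :: nseq ki.-1 false | ki <- k]).
Definition index_of_boxes (b : seq bool) : seq nat :=
  foldr (fun c acc => if c then (1 :: acc)%N else ((head 1 acc).+1 :: behead acc)%N)
        [:: 1%N] b.
Definition hoffman_dual (k : seq nat) : seq nat :=
  index_of_boxes (map negb (boxes_of_index k)).

Definition poch (a : Qt) (n : nat) : Qt := \prod_(i < n) (a + i%:R).
Definition binomt (t : Qt) (n : nat) : Qt := (\prod_(i < n) (t - i%:R)) / (n`!)%:R.

(* Tuples (n_1,...,n_r) in [N-1]^r are encoded by f : {ffun 'I_r -> 'I_(N.-1)},
   with n_{i+1} = f i + 1 (0-based position i).  nval f i is n at 0-based
   position i (0 if out of range). *)
Definition nval r N (f : {ffun 'I_r -> 'I_(N.-1)}) (i : nat) : nat :=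
  if insub i is Some j then (f j).+1 else 0%N.
Definition memA r (A : {set 'I_r}) (i : nat) : bool :=
  if insub i is Some j then j \in A else false.

(* \overline{S}_{r,N}(A), shifted to 0-based positions: for consecutive
   positions i, i+1 < r: n_i < n_{i+1} if i+1 in A, else n_i <= n_{i+1}. *)
Definition inSbar r N (A : {set 'I_r}) (f : {ffun 'I_r -> 'I_(N.-1)}) : bool :=
  [forall i : 'I_r, (i.+1 < r)%N ==>
     (if memA A i.+1 then (nval f i < nval f i.+1)%N
      else (nval f i <= nval f i.+1)%N)].

Definition inSstar r N (A : {set 'I_r}) (f : {ffun 'I_r -> 'I_(N.-1)}) : bool :=
  [forall i : 'I_r, (i.+1 < r)%N ==>
     (if (memA A i || ~~ memA A i.+1) then (nval f i <= nval f i.+1)%N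
      else (nval f i < nval f i.+1)%N)].

Definition F_N (N : nat) (k : seq nat) (t : Qt) : Qt :=
  let r := size k in
  \sum_(A : {set 'I_r}) (-1) ^+ #|A| *
    \sum_(f : {ffun 'I_r -> 'I_(N.-1)} | inSbar A f)
       ((\prod_(i in A) (N%:R - (nval f i)%:R + t) ^- (nth 0%N k i)) *
        (\prod_(i in ~: A) ((nval f i)%:R : Qt) ^- (nth 0%N k i))).

Definition G_N (N : nat) (k : seq nat) (t : Qt) : Qt :=
  let r := size k in
  \sum_(A : {set 'I_r} | [forall i in A, (nth 0%N k i == 1%N) && (i.+1 != r)])
    \sum_(f : {ffun 'I_r -> 'I_(N.-1)} | inSstar A f)
       ((\prod_(i in A) (N%:R - (nval f i)%:R + t)^-1) *
        (\prod_(i in ~: A) ((nval f i)%:R : Qt) ^- (nth 0%N k i)) *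
        ((-1) ^+ (nval f r.-1).-1 * binomt t (nval f r.-1) *
         poch (1 - N%:R) (nval f r.-1) / poch (1 - N%:R - t) (nval f r.-1))).

(* Both sides are sums, over tuples of states (n_i, [i \in A]), of products of local
   factors, i.e. iterated transfer operators.  Read an index as a word of commas and
   pluses: F_N(k) applies an F-transition to the next component for each comma and one
   more power of the current factor for each plus; G_N is built in the same way from
   G-transitions and G-powers, ending with the terminal factor
   (-1)^(n_r - 1) binom(t, n_r) (1 - N)_(n_r) / (1 - N - t)_(n_r).
   An explicit connector matrix K, with entries made of binomial coefficients and
   falling factorials of v = N - 1 + t, intertwines the two systems with commas and
   pluses exchanged: K (F-transition) = (G-power) K and K (F-power) = (G-transition) K.
   Moreover K sends the constant vector 1 to the G terminal vector and the G initial
   weights to the F initial weights.  Pushing K through the word of k thus turns F_N(k)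
   into G_N of the word with commas and pluses exchanged, which is G_N(k^vee). *)

From mathcomp Require Import all_boot all_algebra fraction ring.
Set Implicit Arguments. Unset Strict Implicit. Unset Printing Implicit Defensive.
Import GRing.Theory Num.Theory.
Local Open Scope ring_scope.

Definition falling (R : pzRingType) (a : R) n := \prod_(j < n) (a - j%:R).

Lemma fallingS (R : pzRingType) (a : R) n :
  falling a n.+1 = falling a n * (a - n%:R).
Proof. by rewrite /falling big_ord_recr. Qed.

Lemma fallingSl (R : pzRingType) (a : R) n :
  falling a n.+1 = a * falling (a - 1) n.
Proof.
rewrite /falling big_ord_recl subr0; congr (_ * _).
by apply: eq_bigr => j _; rewrite lift0 -natr1 opprD addrA addrAC.
Qed.

Lemma natr_falling (R : pzRingType) n m : falling (n%:R : R) m = (n ^_ m)%:R.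
Proof.
elim: m => [|m IHm]; first by rewrite /falling big_ord0 ffactn0.
rewrite fallingS IHm ffactnSr natrM.
by case: (leqP m n) => [/natrB -> // | /ffact_small ->]; rewrite !mul0r.
Qed.

Definition rising (R : pzRingType) (a : R) n := \prod_(j < n) (a + j%:R).

Lemma rising_falling (R : pzRingType) (a : R) n :
  rising a n = (-1) ^+ n * falling (- a) n.
Proof.
rewrite /rising /falling (eq_bigr (fun j : 'I_n => - (- a - j%:R))) => [|j _].
  by rewrite prodrN card_ord.
by rewrite opprB opprK addrC.
Qed.

Lemma natr_mul_bin_left (R : pzRingType) p i :
  (i%:R + 1) * 'C(p, i.+1)%:R = (p%:R - i%:R) * 'C(p, i)%:R :> R.
Proof.
case: (leqP i p) => [le_ip | lt_pi]; last by rewrite !bin_small ?mulr0 // ltnW.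
by rewrite natr1 -natrB // -!natrM mul_bin_left.
Qed.

Lemma natr_mul_bin_down (R : pzRingType) q i :
  (q%:R + 1) * 'C(q, i)%:R = (q%:R + 1 - i%:R) * 'C(q.+1, i)%:R :> R.
Proof.
case: (leqP i q.+1) => [le_iq | lt_qi]; last by rewrite !bin_small ?mulr0 // ltnW.
by rewrite natr1 -natrB // -!natrM -mul_bin_down.
Qed.

Lemma telescope_sum_geq (R : pzRingType) n i (g : nat -> R) : (i <= n)%N ->
  \sum_(j < n) (i <= j)%N%:R * (g j - g j.+1) = g i - g n.
Proof.
move=> le_in; rewrite -opprB -telescope_sumr // -sumrN big_geq_mkord [RHS]big_mkcond.
by apply: eq_bigr => j _; case: leqP; rewrite ?mul1r ?mul0r ?opprB ?oppr0.
Qed.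

Lemma telescope_sum_ord (R : pzRingType) n (g : nat -> R) :
  \sum_(j < n) (g j - g j.+1) = g 0%N - g n.
Proof.
by rewrite -(telescope_sum_geq g (leq0n n)); apply: eq_bigr => j _; rewrite leq0n mul1r.
Qed.

Lemma telescope_sum_ltn (R : pzRingType) n m (h : nat -> R) : (m <= n)%N ->
  \sum_(j < n) (j < m)%N%:R * (h j.+1 - h j) = h m - h 0%N.
Proof.
move=> le_mn; rewrite -telescope_sumr // big_mkord.
rewrite (big_ord_widen n (fun j => h j.+1 - h j) le_mn).
by rewrite [RHS]big_mkcond; apply: eq_bigr => j _; case: ltnP; rewrite ?mul1r ?mul0r.
Qed.

Lemma sum_natr_eq (R : pzSemiRingType) n i (x : nat -> R) : (i < n)%N ->
  \sum_(j < n) (i == j :> nat)%:R * x j = x i.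
Proof.
move=> lt_in; rewrite (bigD1 (Ordinal lt_in)) //= eqxx mul1r big1 ?addr0 // => j ne_ji.
rewrite (_ : (i == j :> nat) = false) ?mul0r //.
by apply: contraNF ne_ji => /eqP eq_ij; apply/eqP/val_inj.
Qed.

Definition sum_states (V : nmodType) n (f : nat -> bool -> V) : V :=
  \sum_(s : 'I_n * bool) f s.1 s.2.

Lemma sum_statesE (V : nmodType) n (f : nat -> bool -> V) :
  sum_states n f = \sum_(j < n) \sum_(bj : bool) f j bj.
Proof. by rewrite /sum_states pair_bigA. Qed.

Lemma eq_sum_states (V : nmodType) n (f g : nat -> bool -> V) :
  (forall j bj, (j < n)%N -> f j bj = g j bj) -> sum_states n f = sum_states n g.
Proof. by move=> eq_fg; apply: eq_bigr => s _; apply: eq_fg. Qed.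

Lemma exchange_sum_states (R : pzSemiRingType) n (a : nat -> bool -> R)
    (B : nat -> bool -> nat -> bool -> R) (c : nat -> bool -> R) :
  sum_states n (fun i bi => a i bi * sum_states n (fun j bj => B i bi j bj * c j bj)) =
  sum_states n (fun j bj => sum_states n (fun i bi => a i bi * B i bi j bj) * c j bj).
Proof.
rewrite /sum_states; under eq_bigr => s _ do rewrite mulr_sumr.
rewrite exchange_big /=; apply: eq_bigr => s' _.
by rewrite mulr_suml; apply: eq_bigr => s _; rewrite mulrA.
Qed.

(** * The connector *)

Section Connector.

Variables (F : fieldType) (v : F).
Hypothesis v_sub_natr_neq0 : forall i, v - i%:R != 0.
Hypothesis natrS_neq0 : forall i, i%:R + 1 != 0 :> F.

Lemma falling_v_neq0 n : falling v n != 0.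
Proof. by apply/prodf_neq0 => j _; apply: v_sub_natr_neq0. Qed.

Local Ltac field_nz :=
  field; rewrite ?falling_v_neq0 ?v_sub_natr_neq0 ?natrS_neq0.

Definition recip_succ i : F := (i%:R + 1)^-1.
Definition recip_shift i : F := (v - i%:R)^-1.

Definition alpha i p : F :=
  (-1) ^+ i * 'C(p, i)%:R * falling (v - 1 - p%:R) i / falling v i.
Definition beta i p : F :=
  (-1) ^+ i * 'C(p, i)%:R * falling (v - 1 - p%:R) i.+1 / falling v i.+1.
Definition gamma i p : F := - alpha i p * (p%:R - i%:R) / (v - i%:R).

Lemma alpha0 p : alpha 0 p = 1.
Proof. by rewrite /alpha /falling !big_ord0 bin0 expr0 !mul1r invr1. Qed.

Lemma alpha_small i p : (p < i)%N -> alpha i p = 0.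
Proof. by move=> lt_pi; rewrite /alpha bin_small // !(mulr0, mul0r). Qed.

Lemma beta_alpha i p : beta i p = alpha i p * (v - 1 - p%:R - i%:R) / (v - i%:R).
Proof. by rewrite /beta /alpha !fallingS; field_nz. Qed.

Lemma alphaS i p : alpha i.+1 p =
  - alpha i p * (p%:R - i%:R) * (v - 1 - p%:R - i%:R) / ((i%:R + 1) * (v - i%:R)).
Proof.
have binS : 'C(p, i.+1)%:R = (p%:R - i%:R) * 'C(p, i)%:R / (i%:R + 1) :> F.
  by rewrite -natr_mul_bin_left; field_nz.
by rewrite /alpha !fallingS exprS binS; field_nz.
Qed.

Lemma natr_beta_pred i p :
  p%:R * beta i p.-1 = alpha i p * (p%:R - i%:R) * (v - p%:R) / (v - i%:R).
Proof.
case: p => [|q]; last first.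
  rewrite /beta /alpha /= fallingSl fallingS -natr1.
  have binD : 'C(q, i)%:R = (q%:R + 1 - i%:R) * 'C(q.+1, i)%:R / (q%:R + 1) :> F.
    by rewrite -natr_mul_bin_down; field_nz.
  have -> : v - 1 - (q%:R + 1) = v - 1 - q%:R - 1 by rewrite opprD addrA.
  by rewrite binD; field_nz.
rewrite mul0r; case: i => [|i]; first by rewrite subrr !(mulr0, mul0r).
by rewrite alpha_small // !mul0r.
Qed.

Definition connector i (bi : bool) p (bp : bool) : F :=
  if bi then (if bp then - alpha i p else alpha i p)
  else (if bp then gamma i p else beta i p).

(* A state (j, b) stands for a component n_i = j + 1 with b = [i \in A]; with
   v = N - 1 + t, the factor 1 / (N - n_i + t) of a position in A is recip_shift j. *)
Definition weight p (bp : bool) : F := if bp then recip_shift p else recip_succ p.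
Definition signed_weight p (bp : bool) : F :=
  if bp then - recip_shift p else recip_succ p.
Definition weightG p (bp : bool) : F := if bp then 0 else recip_succ p.
Definition stepF i p (bp : bool) : F :=
  (if bp then i < p else i <= p)%N%:R * signed_weight p bp.
Definition stepG i (bi : bool) p (bp : bool) : F :=
  (if bp && ~~ bi then i < p else i <= p)%N%:R * weight p bp.

(* The partial row sums of the connector, see sum_bool_connector. *)
Definition rowsum i q : F := q%:R * beta i q.-1 / (i%:R + 1).

Lemma rowsum0 i : rowsum i 0 = 0.
Proof. by rewrite /rowsum !mul0r. Qed.

Lemma rowsum_closed (t : F) m j : v = m%:R + t -> (j < m)%N ->
  rowsum j m = (-1) ^+ j * 'C(m, j.+1)%:R * falling t j.+1 / falling v j.+1.
Proof.
move=> def_v lt_jm; have m_gt0 : (0 < m)%N := leq_ltn_trans (leq0n j) lt_jm.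
have m_neq0 : m%:R != 0 :> F by rewrite -(prednK m_gt0) -natr1 natrS_neq0.
have binS : 'C(m.-1, j)%:R = (j%:R + 1) * 'C(m, j.+1)%:R / m%:R :> F.
  by rewrite natr1 -natrM -mul_bin_diag natrM; field.
rewrite /rowsum /beta binS /=.
have -> : v - 1 - m.-1%:R = t by rewrite def_v -subn1 natrB //; ring.
by field; rewrite m_neq0 falling_v_neq0 natrS_neq0.
Qed.

Lemma rowsum_rising (t : F) m j : v = m%:R + t -> (j < m)%N ->
  rowsum j m = (-1) ^+ j * (falling t j.+1 / j.+1`!%:R) *
               rising (- m%:R) j.+1 / rising (- v) j.+1.
Proof.
move=> def_v lt_jm; rewrite (rowsum_closed def_v lt_jm) !rising_falling !opprK.
have fact_neq0 : j.+1`!%:R != 0 :> F by rewrite -(prednK (fact_gt0 _)) -natr1.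
rewrite natr_falling -bin_ffact natrM.
by field; rewrite fact_neq0 falling_v_neq0 expf_neq0 // oppr_eq0 oner_eq0.
Qed.

Lemma connector_weight_diff j p bp :
  recip_succ j * connector j false p bp + recip_shift j * connector j true p bp =
  (connector j true p bp - connector j.+1 true p bp) * weight p bp.
Proof.
rewrite /connector /weight /gamma /recip_succ /recip_shift alphaS.
by case: bp; rewrite ?beta_alpha; field_nz.
Qed.

Lemma connector_false_weight i p bp :
  connector i false p bp * weight p bp =
  connector i true p bp * weight p bp - recip_shift i * connector i true p bp.
Proof.
rewrite /connector /weight /gamma /recip_succ /recip_shift.
by case: bp; rewrite ?beta_alpha; field_nz.
Qed.

Lemma sum_bool_connector i bi j :
  \sum_(bj : bool) connector i bi j bj =
  if bi then 0 else rowsum i j.+1 - rowsum i j.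
Proof.
rewrite big_bool; case: bi => /=; first by rewrite addNr.
by rewrite /rowsum (natr_beta_pred i j) /= -natr1 beta_alpha /gamma; field_nz.
Qed.

Lemma rowsumS_recip i q : recip_succ q * rowsum i q.+1 = recip_succ i * beta i q.
Proof. by rewrite /rowsum /= -natr1 /recip_succ; field_nz. Qed.

Lemma rowsum_recip_shift i q :
  - recip_shift q * rowsum i q = recip_succ i * gamma i q.
Proof. by rewrite /rowsum natr_beta_pred /recip_shift /recip_succ /gamma; field_nz. Qed.

Lemma connector_true_small i p bp : (p < i)%N -> connector i true p bp = 0.
Proof. by move=> lt_pi; rewrite /connector alpha_small // oppr0; case: bp. Qed.

Section Transfer.

Variable n : nat.

(* As matrices indexed by states, with K := connector, the next four lemmas read
   K D = T_G K, K T_F = D_G K, K 1 = psi and weight^T K = signed_weight^T, where T_F, T_G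
   are the transition matrices stepF, stepG, D, D_G the diagonal matrices of weight,
   weightG, and psi (i, b) = if b then 0 else rowsum i n. *)
Lemma connector_weight_stepG i bi p bp : (i < n)%N -> (p < n)%N ->
  connector i bi p bp * weight p bp =
  sum_states n (fun j bj => stepG i bi j bj * connector j bj p bp).
Proof.
move=> lt_in lt_pn; set Kw := fun j => connector j true p bp * weight p bp.
(* Row j telescopes, except at j = i where stepG is strict when bi is false. *)
have row j : \sum_(bj : bool) stepG i bi j bj * connector j bj p bp =
    (i <= j)%N%:R * (Kw j - Kw j.+1)
    - (~~ bi)%:R * ((i == j :> nat)%:R * (recip_shift j * connector j true p bp)).
  rewrite /Kw -mulrBl -connector_weight_diff big_bool /stepG /weight /=.
  case: bi => /=; first by ring.
  by rewrite ltn_neqAle; case: eqP => [->|_]; rewrite ?leqnn /=; ring.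
rewrite sum_statesE; under eq_bigr => j _ do rewrite row.
rewrite sumrB -mulr_sumr.
rewrite telescope_sum_geq ?(ltnW lt_in) //.
rewrite (sum_natr_eq (fun j => recip_shift j * connector j true p bp)) //.
rewrite /Kw (connector_true_small bp lt_pn) mul0r subr0.
by case: bi {row}; rewrite ?mul0r ?subr0 ?mul1r -?connector_false_weight.
Qed.

Lemma connector_stepF i bi q bq : (q < n)%N ->
  sum_states n (fun j bj => connector i bi j bj * stepF j q bq) =
  weightG i bi * connector i bi q bq.
Proof.
move=> lt_qn; rewrite sum_statesE.
under eq_bigr => j _ do rewrite -mulr_suml sum_bool_connector.
case: bi; first by rewrite mul0r big1 // => j _; rewrite mul0r.
rewrite /stepF /weightG /connector /signed_weight /=.
under eq_bigr => j _ do rewrite mulrA mulrC [_ * _%:R]mulrC.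
rewrite -mulr_sumr; case: bq.
  by rewrite telescope_sum_ltn ?(ltnW lt_qn) // rowsum0 subr0 rowsum_recip_shift.
under eq_bigr => j _ do rewrite -ltnS.
by rewrite telescope_sum_ltn // rowsum0 subr0 rowsumS_recip.
Qed.

Lemma sum_connector i bi :
  sum_states n (connector i bi) = if bi then 0 else rowsum i n.
Proof.
rewrite sum_statesE; under eq_bigr => j _ do rewrite sum_bool_connector.
case: bi; first by rewrite big1.
rewrite -(big_mkord xpredT (fun j => rowsum i j.+1 - rowsum i j)).
by rewrite telescope_sumr // rowsum0 subr0.
Qed.

Lemma weight_connector p bp : (p < n)%N ->
  sum_states n (fun j bj => weight j bj * connector j bj p bp) = signed_weight p bp.
Proof.
move=> lt_pn; rewrite sum_statesE.
under eq_bigr => j _ do rewrite big_bool /= addrC connector_weight_diff mulrBl.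
rewrite (telescope_sum_ord n (fun j => connector j true p bp * weight p bp)).
rewrite (connector_true_small bp lt_pn) mul0r subr0 /connector alpha0.
by rewrite /signed_weight /weight; case: bp; rewrite ?mulN1r ?mul1r.
Qed.

Fixpoint wordF (b : seq bool) i bi : F :=
  match b with
  | [::] => 1
  | true :: b' => sum_states n (fun j bj => stepF i j bj * wordF b' j bj)
  | false :: b' => weight i bi * wordF b' i bi
  end.

Fixpoint wordG (ph : nat -> F) (b : seq bool) i bi : F :=
  match b with
  | [::] => if bi then 0 else ph i
  | true :: b' => sum_states n (fun j bj => stepG i bi j bj * wordG ph b' j bj)
  | false :: b' => weightG i bi * wordG ph b' i bi
  end.

Lemma wordF_nseq m b j bj :
  wordF (nseq m false ++ b) j bj = weight j bj ^+ m * wordF b j bj.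
Proof. by elim: m => [|m IHm] /=; rewrite ?mul1r // IHm exprS mulrA. Qed.

Lemma wordG_nseq ph m b j bj :
  wordG ph (nseq m false ++ b) j bj = weightG j bj ^+ m * wordG ph b j bj.
Proof. by elim: m => [|m IHm] /=; rewrite ?mul1r // IHm exprS mulrA. Qed.

Section Duality.

Variable ph : nat -> F.
Hypothesis ph_rowsum : forall i, (i < n)%N -> ph i = rowsum i n.

Lemma connector_wordF b i bi : (i < n)%N ->
  sum_states n (fun j bj => connector i bi j bj * wordF b j bj) =
  wordG ph (map negb b) i bi.
Proof.
elim: b i bi => [|[] b IHb] i bi lt_in /=.
- under eq_sum_states => j bj _ do rewrite mulr1.
  by rewrite sum_connector ph_rowsum.
- rewrite exchange_sum_states.
  under eq_sum_states => j bj lt_jn do rewrite (connector_stepF _ _ _ lt_jn) -mulrA.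
  by rewrite -IHb // /sum_states mulr_sumr.
- under eq_sum_states => j bj lt_jn
    do rewrite mulrA (connector_weight_stepG _ _ lt_in lt_jn).
  rewrite -exchange_sum_states; apply: eq_sum_states => j bj lt_jn.
  by rewrite IHb.
Qed.

Lemma signed_weight_wordF b :
  sum_states n (fun j bj => signed_weight j bj * wordF b j bj) =
  sum_states n (fun j bj => weight j bj * wordG ph (map negb b) j bj).
Proof.
under [RHS]eq_sum_states => j bj lt_jn do rewrite -(connector_wordF _ _ lt_jn).
rewrite exchange_sum_states; apply: eq_sum_states => j bj lt_jn.
by rewrite weight_connector.
Qed.

End Duality.

End Transfer.

End Connector.

(** * Chain sums over finite functions *)

Section Chains.

Variable S : finType.

Definition ffun_onth r (g : {ffun 'I_r -> S}) (i : nat) : option S :=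
  if insub i is Some j then Some (g j) else None.

Lemma ffun_onth_ord r (g : {ffun 'I_r -> S}) (i : 'I_r) : ffun_onth g i = Some (g i).
Proof. by rewrite /ffun_onth valK. Qed.

Lemma ffun_onth_lt r (g : {ffun 'I_r -> S}) i (lt_ir : (i < r)%N) :
  ffun_onth g i = Some (g (Ordinal lt_ir)).
Proof. by rewrite /ffun_onth insubT. Qed.

Lemma ffun_onth_ge r (g : {ffun 'I_r -> S}) i : (r <= i)%N -> ffun_onth g i = None.
Proof. by move=> le_ri; rewrite /ffun_onth insubF // ltnNge le_ri. Qed.

Definition ffun_cons r (s : S) (h : {ffun 'I_r -> S}) : {ffun 'I_r.+1 -> S} :=
  [ffun i => if unlift ord0 i is Some j then h j else s].

Lemma ffun_onth_cons0 r s (h : {ffun 'I_r -> S}) : ffun_onth (ffun_cons s h) 0 = Some s.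
Proof. by rewrite (ffun_onth_ord _ ord0) ffunE unlift_none. Qed.

Lemma ffun_onth_consS r s (h : {ffun 'I_r -> S}) i :
  ffun_onth (ffun_cons s h) i.+1 = ffun_onth h i.
Proof.
case: (ltnP i r) => [lt_ir | le_ri]; last by rewrite !ffun_onth_ge.
rewrite (ffun_onth_lt h lt_ir) (ffun_onth_ord _ (lift ord0 (Ordinal lt_ir))).
by rewrite ffunE liftK.
Qed.

Lemma sum_ffun_cons (V : nmodType) r (H : {ffun 'I_r.+1 -> S} -> V) :
  \sum_(g : {ffun 'I_r.+1 -> S}) H g =
  \sum_(s : S) \sum_(h : {ffun 'I_r -> S}) H (ffun_cons s h).
Proof.
pose uncons (g : {ffun 'I_r.+1 -> S}) := (g ord0, [ffun j : 'I_r => g (lift ord0 j)]).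
rewrite pair_bigA /= (reindex (fun p => ffun_cons p.1 p.2)) //.
exists uncons => [[s h] _ | g _].
  rewrite /uncons /ffun_cons ffunE unlift_none; congr (_, _).
  by apply/ffunP => j; rewrite !ffunE liftK.
apply/ffunP => i; rewrite ffunE.
by case: unliftP => [j ->|->]; rewrite ?ffunE.
Qed.

Fixpoint chain_sum (R : pzSemiRingType) r (L : nat -> S -> option S -> R)
    (E : option S -> R) : R :=
  if r is r'.+1 then \sum_(s : S) E (Some s) * chain_sum r' (fun i => L i.+1) (L 0%N s)
  else E None.

Lemma chain_sumE (R : pzSemiRingType) r (L : nat -> S -> option S -> R) E :
  \sum_(g : {ffun 'I_r -> S})
    E (ffun_onth g 0) * \prod_(i < r) L i (g i) (ffun_onth g i.+1) = chain_sum r L E.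
Proof.
elim: r L E => [|r IHr] L E /=.
  rewrite (eq_bigr (fun _ => E None)) => [|g _]; last first.
    by rewrite big_ord0 mulr1 ffun_onth_ge.
  by rewrite sumr_const card_ffun card_ord expn0.
rewrite sum_ffun_cons; apply: eq_bigr => s _.
rewrite -IHr mulr_sumr; apply: eq_bigr => h _.
rewrite ffun_onth_cons0 big_ord_recl ffunE unlift_none ffun_onth_consS.
by congr (_ * (_ * _)); apply: eq_bigr => i _; rewrite lift0 ffunE liftK ffun_onth_consS.
Qed.

Lemma chain_sumMl (R : pzSemiRingType) r (L : nat -> S -> option S -> R) E c :
  chain_sum r L (fun o => c * E o) = c * chain_sum r L E.
Proof.
by case: r => [|r] //=; rewrite mulr_sumr; apply: eq_bigr => s _; rewrite mulrA.
Qed.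

End Chains.

(** * Box words of indices *)

(* The box word of k preceded by a comma, see index_of_boxesP. *)
Definition index_word (k : seq nat) : seq bool :=
  flatten [seq true :: nseq ki.-1 false | ki <- k].

Lemma index_word_cons a k :
  index_word (a :: k) = true :: nseq a.-1 false ++ index_word k.
Proof. by []. Qed.

Lemma index_of_boxesP b : exists a rest, [/\ index_of_boxes b = a :: rest,
  is_index (a :: rest) & index_word (a :: rest) = true :: b].
Proof.
elim: b => [|[] b [a [rest [iob idx_ar word_ar]]]]; first by exists 1%N, [::].
all: rewrite /index_of_boxes /= -/(index_of_boxes b) iob /=.
  by exists 1%N, (a :: rest); rewrite index_word_cons word_ar idx_ar.
exists a.+1, rest; move: idx_ar word_ar; rewrite /is_index !index_word_cons /=.
by case: a {iob} => // a /andP[_ ->] [<-].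
Qed.

Lemma index_of_boxes_index b : is_index (index_of_boxes b).
Proof. by have [a [rest [-> ? _]]] := index_of_boxesP b. Qed.

Lemma index_of_boxes_neq_nil b : index_of_boxes b != [::].
Proof. by have [a [rest [-> _ _]]] := index_of_boxesP b. Qed.

Lemma index_of_boxesK : cancel index_of_boxes boxes_of_index.
Proof.
move=> b; have [a [rest [-> _ word_ar]]] := index_of_boxesP b.
by rewrite /boxes_of_index -/(index_word _) word_ar.
Qed.

(** * F_N and G_N as chain sums *)

Lemma sum_set_ffun (V : nmodType) (I T : finType) (H : {set I} -> {ffun I -> T} -> V) :
  \sum_(A : {set I}) \sum_(f : {ffun I -> T}) H A f =
  \sum_(g : {ffun I -> T * bool}) H [set i | (g i).2] [ffun i => (g i).1].
Proof.
pose split (g : {ffun I -> T * bool}) := ([set i | (g i).2], [ffun i => (g i).1]).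
pose join (p : {set I} * {ffun I -> T}) := [ffun i => (p.2 i, i \in p.1)].
rewrite pair_bigA /= (reindex split) //; exists join => [g _ | [A f] _].
  by apply/ffunP => i; rewrite !ffunE inE; case: (g i).
by congr (_, _); [apply/setP => i | apply/ffunP => i]; rewrite ?inE !ffunE.
Qed.

Lemma natr_forall (R : comPzSemiRingType) (I : finType) (P : pred I) :
  [forall i, P i]%:R = \prod_i (P i)%:R :> R.
Proof.
case: (boolP [forall i, P i]) => [/forallP P_all | /forallPn [i not_Pi]].
  by rewrite big1 // => i _; rewrite P_all.
by rewrite (bigD1 i) //= (negbTE not_Pi) mul0r.
Qed.

Lemma prod_if_in (R : comPzSemiRingType) (I : finType) (A : {set I}) (F G : I -> R) :
  \prod_i (if i \in A then F i else G i) = \prod_(i in A) F i * \prod_(i in ~: A) G i.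
Proof. by rewrite big_if; congr (_ * _); apply: eq_bigl => i; rewrite ?inE. Qed.

Lemma memA_ffun r (T : finType) (g : {ffun 'I_r -> T * bool}) i :
  memA [set j | (g j).2] i = if ffun_onth g i is Some s then s.2 else false.
Proof. by rewrite /memA /ffun_onth; case: insub => // j; rewrite inE. Qed.

Lemma nval_ffun r N (g : {ffun 'I_r -> 'I_N.-1 * bool}) i :
  nval [ffun j => (g j).1] i = if ffun_onth g i is Some s then s.1.+1 else 0%N.
Proof. by rewrite /nval /ffun_onth; case: insub => // j; rewrite ffunE. Qed.

Lemma prod_if_last (R : pzSemiRingType) r (c : nat -> R) : (0 < r)%N ->
  \prod_(i < r) (if i.+1 == r then c i else 1) = c r.-1.
Proof.
case: r => // r _; rewrite big_ord_recr /= eqxx big1 ?mul1r // => i _.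
by rewrite eqSS (ltn_eqF (ltn_ord i)).
Qed.

Lemma int_add_tQ_neq0 (c : int) : c%:~R + tQ != 0.
Proof.
rewrite /tQ -(rmorph_int (@tofrac _)) -tofracD tofrac_eq0; apply/negP => /eqP eq0.
have : size (c%:~R + 'X : {poly rat}) = 2%N.
  by rewrite addrC -(rmorph_int (@polyC _)) size_XaddC.
by rewrite eq0 size_poly0.
Qed.

Lemma natr_Qt_eq0 m : (m%:R == 0 :> Qt) = (m == 0)%N.
Proof.
by rewrite -(rmorph_nat (@tofrac _)) tofrac_eq0 -polyC_natr polyC_eq0 pnatr_eq0.
Qed.

Section Specialization.

Variable n : nat.
Local Notation N := n.+1.
Local Notation v := (n%:R + tQ : Qt).

Lemma v_sub_natr_neq0 i : v - i%:R != 0.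
Proof. by rewrite addrAC; have := int_add_tQ_neq0 (n%:Z - i%:Z); rewrite intrB. Qed.

Lemma natrS_Qt_neq0 i : i%:R + 1 != 0 :> Qt.
Proof. by rewrite natr1 natr_Qt_eq0. Qed.

Lemma N_sub_natrS j : N%:R - j.+1%:R + tQ = v - j%:R.
Proof. by rewrite -!natr1; ring. Qed.

(* F_N's summand at a tuple g of states is \prod_i localF k i (g i) (next state of g):
   termF is the factor of a component, including the sign of a position in A, and linkF
   the order constraint with the next component.  In G_N, the last linkG also carries
   the terminal factor lastG and excludes the last position from A. *)
Definition termF a j (bj : bool) : Qt :=
  if bj then - (N%:R - j.+1%:R + tQ) ^- a else j.+1%:R ^- a.
Definition linkF j (o : option ('I_n * bool)) : Qt :=
  if o is Some s then (if s.2 then j < s.1 else j <= s.1)%N%:R else 1.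
Definition localF (k : seq nat) i (s : 'I_n * bool) o : Qt :=
  termF (nth 0%N k i) s.1 s.2 * linkF s.1 o.

Definition lastG m : Qt :=
  (-1) ^+ m.-1 * binomt tQ m * poch (1 - N%:R) m / poch (1 - N%:R - tQ) m.
Definition termG a j (bj : bool) : Qt :=
  if bj then (a == 1)%N%:R * (N%:R - j.+1%:R + tQ)^-1 else j.+1%:R ^- a.
Definition linkG j (bj : bool) (o : option ('I_n * bool)) : Qt :=
  if o is Some s then (if s.2 && ~~ bj then j < s.1 else j <= s.1)%N%:R
  else if bj then 0 else lastG j.+1.
Definition localG (k : seq nat) i (s : 'I_n * bool) o : Qt :=
  termG (nth 0%N k i) s.1 s.2 * linkG s.1 s.2 o.

Lemma termF_weight a j bj : (0 < a)%N ->
  termF a j bj = signed_weight v j bj * weight v j bj ^+ a.-1.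
Proof.
move=> a_gt0; rewrite /termF /signed_weight /weight /recip_shift /recip_succ.
by rewrite -(prednK a_gt0) N_sub_natrS -natr1; case: bj; rewrite -exprVn exprS ?mulNr.
Qed.

Lemma termG_weight a j bj : (0 < a)%N ->
  termG a j bj = weight v j bj * weightG Qt j bj ^+ a.-1.
Proof.
move=> a_gt0; rewrite /termG /weight /weightG /recip_shift /recip_succ.
rewrite -(prednK a_gt0) N_sub_natrS -natr1.
by case: bj; rewrite -?exprVn ?exprS // expr0n mulrC.
Qed.

Lemma linkF_stepF a j0 (j : 'I_n) bj : (0 < a)%N ->
  linkF j0 (Some (j, bj)) * termF a j bj = stepF v j0 j bj * weight v j bj ^+ a.-1.
Proof. by move=> a_gt0; rewrite termF_weight // mulrA. Qed.

Lemma linkG_stepG a j0 b0 (j : 'I_n) bj : (0 < a)%N ->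
  linkG j0 b0 (Some (j, bj)) * termG a j bj =
  stepG v j0 b0 j bj * weightG Qt j bj ^+ a.-1.
Proof. by move=> a_gt0; rewrite termG_weight // mulrA. Qed.

Lemma chain_localF_word k : is_index k -> forall j0 b0,
  chain_sum (size k) (localF k) (linkF j0) = wordF v n (index_word k) j0 b0.
Proof.
elim: k => [|a k IHk] //= /andP[a_gt0 k_idx] j0 b0.
apply: eq_bigr => -[j bj] _ /=.
by rewrite chain_sumMl (IHk k_idx j bj) wordF_nseq mulrA linkF_stepF // mulrA.
Qed.

Lemma chain_localG_word k : is_index k -> forall j0 b0,
  chain_sum (size k) (localG k) (linkG j0 b0) =
  wordG v n (fun j => lastG j.+1) (index_word k) j0 b0.
Proof.
elim: k => [|a k IHk] //= /andP[a_gt0 k_idx] j0 b0.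
apply: eq_bigr => -[j bj] _ /=.
by rewrite chain_sumMl (IHk k_idx j bj) wordG_nseq mulrA linkG_stepG // mulrA.
Qed.

Lemma chain_localF_boxes k : is_index k -> k != [::] ->
  chain_sum (size k) (localF k) (fun _ => 1) =
  sum_states n (fun j bj => signed_weight v j bj * wordF v n (boxes_of_index k) j bj).
Proof.
case: k => [|a k] //= /andP[a_gt0 k_idx] _.
apply: eq_bigr => -[j bj] _ /=.
rewrite mul1r chain_sumMl (chain_localF_word k_idx j bj).
by rewrite termF_weight // wordF_nseq mulrA.
Qed.

Lemma chain_localG_boxes k : is_index k -> k != [::] ->
  chain_sum (size k) (localG k) (fun _ => 1) =
  sum_states n (fun j bj =>
    weight v j bj * wordG v n (fun j => lastG j.+1) (boxes_of_index k) j bj).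
Proof.
case: k => [|a k] //= /andP[a_gt0 k_idx] _.
apply: eq_bigr => -[j bj] _ /=.
rewrite mul1r chain_sumMl (chain_localG_word k_idx j bj).
by rewrite termG_weight // wordG_nseq mulrA.
Qed.

Lemma F_N_chain k : F_N N k tQ = chain_sum (size k) (localF k) (fun _ => 1).
Proof.
rewrite -chain_sumE /F_N; under eq_bigr => A _ do rewrite mulr_sumr big_mkcond /=.
rewrite sum_set_ffun; apply: eq_bigr => g _; rewrite mul1r /localF big_split /=.
set A := [set i | (g i).2]; set f : {ffun 'I_(size k) -> 'I_N.-1} := [ffun i => (g i).1].
have -> : \prod_i linkF (g i).1 (ffun_onth g i.+1) = (inSbar A f)%:R.
  rewrite /inSbar natr_forall; apply: eq_bigr => i _.
  rewrite memA_ffun !nval_ffun ffun_onth_ord /=.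
  case: (ltnP i.+1 (size k)) => [lt_ik | le_ki]; last by rewrite ffun_onth_ge.
  by rewrite (ffun_onth_lt g lt_ik); case: (g _) => j [] /=; rewrite ?ltnS.
have -> : \prod_(i : 'I_(size k)) termF (nth 0%N k i) (g i).1 (g i).2 =
    \prod_(i : 'I_(size k))
      (if i \in A then - (N%:R - (nval f i)%:R + tQ) ^- (nth 0%N k i)
       else (nval f i)%:R ^- (nth 0%N k i)).
  by apply: eq_bigr => i _; rewrite inE nval_ffun ffun_onth_ord /termF; case: (g i).
rewrite prod_if_in prodrN.
by case: (inSbar A f); rewrite ?mulr1 ?mulr0 // mulrA.
Qed.

Lemma localG_factor l (g : {ffun 'I_(size l) -> 'I_n * bool}) (i : 'I_(size l)) :
  let A := [set j | (g j).2] in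
  let f : {ffun 'I_(size l) -> 'I_N.-1} := [ffun j => (g j).1] in
  localG l i (g i) (ffun_onth g i.+1) =
    ((i \in A) ==> (nth 0%N l i == 1%N) && (i.+1 != size l))%:R *
    ((i.+1 < size l) ==> (if memA A i || ~~ memA A i.+1 then nval f i <= nval f i.+1
                          else nval f i < nval f i.+1))%N%:R *
    ((if i \in A then (N%:R - (nval f i)%:R + tQ)^-1
      else (nval f i)%:R ^- (nth 0%N l i)) *
     (if i.+1 == size l then lastG (nval f i) else 1)).
Proof.
move=> A f; rewrite inE !memA_ffun !nval_ffun ffun_onth_ord /localG /termG /linkG /=.
case: (ltnP i.+1 (size l)) => [lt_il | le_li].
  rewrite (ffun_onth_lt g lt_il) (ltn_eqF lt_il) /= mulr1.
  case: (g i) => j bj; case: (g _) => j' bj' /=.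
  by case: bj; case: bj'; rewrite /= ?andbT ?ltnS ?mul1r ?mulr1;
    first [by rewrite mulrAC | by rewrite mulrC].
have last_i : i.+1 = size l by apply/eqP; rewrite eqn_leq le_li ltn_ord.
rewrite (ffun_onth_ge g le_li) last_i eqxx /= andbF mulr1.
by case: (g i) => j []; rewrite /= ?mul0r ?mulr0 ?mul1r.
Qed.

Lemma G_N_chain l : l != [::] -> G_N N l tQ = chain_sum (size l) (localG l) (fun _ => 1).
Proof.
move=> l_neq0; rewrite -chain_sumE /G_N big_mkcond /=.
under eq_bigr => A _ do rewrite -mulrb -[_ *+ _]mulr_natl mulr_sumr big_mkcond /=.
rewrite sum_set_ffun; apply: eq_bigr => g _.
rewrite mul1r (eq_bigr _ (fun i _ => localG_factor g i)) !big_split /=.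
set f : {ffun 'I_(size l) -> 'I_N.-1} := [ffun j => (g j).1].
rewrite -!natr_forall -prod_if_in (prod_if_last (fun i => lastG (nval f i))).
  by rewrite -/(inSstar _ f); case: inSstar; rewrite ?mulr1 ?mulr0 ?mul0r.
by rewrite lt0n size_eq0.
Qed.

Lemma lastG_rowsum j : (j < n)%N -> lastG j.+1 = rowsum v j n.
Proof.
move=> lt_jn.
rewrite (rowsum_rising v_sub_natr_neq0 natrS_Qt_neq0 (erefl (n%:R + tQ)) lt_jn).
have -> : - n%:R = 1 - N%:R :> Qt by rewrite -natr1; ring.
by have -> : - v = 1 - N%:R - tQ by rewrite -natr1; ring.
Qed.

End Specialization.

Unset Implicit Arguments.

Theorem mainTheorem16 (N : nat) (k : seq nat) :
  (0 < N)%N -> k != [::] -> is_index k ->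
  F_N N k tQ = G_N N (hoffman_dual k) tQ.
Proof.
case: N => // n _ k_neq0 k_idx; rewrite /hoffman_dual.
rewrite F_N_chain chain_localF_boxes // G_N_chain ?index_of_boxes_neq_nil //.
rewrite chain_localG_boxes ?index_of_boxes_index ?index_of_boxes_neq_nil //.
rewrite index_of_boxesK.
apply: signed_weight_wordF => [i | i | j]; first exact: v_sub_natr_neq0.
  exact: natrS_Qt_neq0.
exact: lastG_rowsum.
Qed.
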